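(* Let $f:\mathbb{R}^n\to\mathbb{R}$ be locally Lipschitz continuous and bounded below, let $x^0\in\mathbb{R}^n$ be such that the level set $\mathrm{lev}_{x^0}f=\{x\in\mathbb{R}^n : f(x)\le f(x^0)\}$ is bounded, and suppose $f$ is prox-regular at every point of $\mathrm{lev}_{x^0}f$. For $x\in\mathbb{R}^n$ and $a\ge 0$ let $g(y;x,a)=f(y)+\frac{a}{2}\|y-x\|_2^2$. Then there exists a number $\bar a\ge 0$ such that for every $a\ge \bar a$, every $x\in\mathbb{R}^n$ and every $y\in\mathrm{lev}_{x^0}f$, the function $g(\cdot;x,a)$ is convex on a neighborhood of $y$.
   Context: $\partial f(\bar x)$ denotes the basic (limiting) subdifferential: the set of limits of Fréchet subgradients $s_j\in\hat\partial f(x_j)$ with $x_j\to\bar x$, $f(x_j)\to f(\bar x)$, where $s\in\hat\partial f(x)$ means $\liminf_{x'\to x, x'\neq x}\frac{f(x')-f(x)-\langle s,x'-x\rangle}{\|x'-x\|}\ge 0$. A function $f$ is prox-regular at $\bar x$ for $\bar v\in\partial f(\bar x)$ if $f$ is finite and locally lower semicontinuous at $\bar x$ and there exist $\epsilon>0$ and $a\ge0$ such that $f(x')\ge f(x)+\langle v,x'-x\rangle-\frac a2\|x'-x\|^2$ for all $x'\in B(\bar x,\epsilon)$ whenever $\|x-\bar x\|<\epsilon$, $v\in\partial f(x)$, $\|v-\bar v\|<\epsilon$, $f(x)<f(\bar x)+\epsilon$; $f$ is prox-regular at $\bar x$ if this holds for every $\bar v\in\partial f(\bar x)$. *)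

From HB Require Import structures.
From mathcomp Require Import all_boot all_order all_algebra.
From mathcomp Require Import reals.
Set Implicit Arguments. Unset Strict Implicit. Unset Printing Implicit Defensive.
Import Order.TTheory GRing.Theory Num.Theory.
Local Open Scope ring_scope.

Section Defs.
Variables (R : realType) (n : nat).
Local Notation vec := 'rV[R]_n.

Definition dotv (x y : vec) : R := \sum_(i < n) x 0 i * y 0 i.
Definition norm2 (x : vec) : R := Num.sqrt (dotv x x).

(* Frechet subgradient: liminf_{x'->x, x'<>x} (f x' - f x - <s,x'-x>)/|x'-x| >= 0,
   unfolded with epsilon-delta. *)
Definition frechet_subgrad (f : vec -> R) (x s : vec) : Prop :=
  forall eps : R, 0 < eps -> exists2 del : R, 0 < del &
    forall x' : vec, 0 < norm2 (x' - x) -> norm2 (x' - x) < del ->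
      - eps * norm2 (x' - x) <= f x' - f x - dotv s (x' - x).

Definition limiting_subgrad (f : vec -> R) (x s : vec) : Prop :=
  exists (xs ss : nat -> vec),
    (forall j, frechet_subgrad f (xs j) (ss j)) /\
    (forall e : R, 0 < e -> exists N, forall j, (N <= j)%N ->
        [/\ norm2 (xs j - x) < e, `|f (xs j) - f x| < e & norm2 (ss j - s) < e]).

Definition locally_lsc (f : vec -> R) (xbar : vec) : Prop :=
  exists2 r : R, 0 < r & forall x : vec, norm2 (x - xbar) < r ->
    forall e : R, 0 < e -> exists2 d : R, 0 < d &
      forall y : vec, norm2 (y - x) < d -> f x - e < f y.

Definition prox_regular_at_for (f : vec -> R) (xbar vbar : vec) : Prop :=
  locally_lsc f xbar /\
  exists eps a : R, [/\ 0 < eps, 0 <= a &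
    forall (x v : vec), norm2 (x - xbar) < eps -> limiting_subgrad f x v ->
      norm2 (v - vbar) < eps -> f x < f xbar + eps ->
      forall x' : vec, norm2 (x' - xbar) < eps ->
        f x + dotv v (x' - x) - a / 2 * (norm2 (x' - x)) ^+ 2 <= f x'].

Definition prox_regular_at (f : vec -> R) (xbar : vec) : Prop :=
  locally_lsc f xbar /\
  forall vbar : vec, limiting_subgrad f xbar vbar -> prox_regular_at_for f xbar vbar.

Definition locally_lipschitz (f : vec -> R) : Prop :=
  forall x : vec, exists2 del : R, 0 < del & exists L : R,
    forall y z : vec, norm2 (y - x) < del -> norm2 (z - x) < del ->
      `|f y - f z| <= L * norm2 (y - z).

Definition convex_near (g : vec -> R) (y : vec) : Prop :=
  exists2 r : R, 0 < r & forall (u w : vec) (t : R),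
    norm2 (u - y) < r -> norm2 (w - y) < r -> 0 <= t -> t <= 1 ->
    g (t *: u + (1 - t) *: w) <= t * g u + (1 - t) * g w.

Definition gfun (f : vec -> R) (x : vec) (a : R) (y : vec) : R :=
  f y + a / 2 * (norm2 (y - x)) ^+ 2.

End Defs.

(* For a point [ybar] of the level set, prox-regularity holds uniformly (one
   radius, one constant) for all Fréchet subgradients of norm at most [2 L],
   [L] a local Lipschitz constant, by compactness of such subgradients.
   Fréchet subgradients of that size exist densely (at minimizers of
   [f + k |. - z|^2]), so [g(.; x, a)] has exact affine minorants densely near
   [ybar] once [a] exceeds the prox-regularity constant, and a continuous
   function with densely many exact minorants is convex.  Compactness of the
   level set turns these local thresholds into a uniform one. *)

From HB Require Import structures.
From mathcomp Require Import all_boot all_order all_algebra.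
From mathcomp Require Import reals ring lra.
From mathcomp Require Import classical_sets boolp topology normedtype sequences.
Import Order.TTheory GRing.Theory Num.Theory numFieldNormedType.Exports.
Local Open Scope ring_scope.
Set Implicit Arguments. Unset Strict Implicit.

Section Euclidean.
Variables (R : realType) (n : nat).
Local Notation vec := 'rV[R]_n.
Implicit Types x y z : vec.

Lemma dotvC x y : dotv x y = dotv y x.
Proof. by apply: eq_bigr => i _; rewrite mulrC. Qed.

Lemma dotvDl x y z : dotv (x + y) z = dotv x z + dotv y z.
Proof. by rewrite /dotv -big_split; apply: eq_bigr => i _; rewrite !mxE mulrDl. Qed.

Lemma dotvZl (c : R) x y : dotv (c *: x) y = c * dotv x y.
Proof. by rewrite /dotv mulr_sumr; apply: eq_bigr => i _; rewrite !mxE mulrA. Qed.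

Lemma dotvNl x y : dotv (- x) y = - dotv x y.
Proof. by rewrite -scaleN1r dotvZl mulN1r. Qed.

Lemma dotvDr x y z : dotv x (y + z) = dotv x y + dotv x z.
Proof. by rewrite dotvC dotvDl !(dotvC x). Qed.

Lemma dotvZr (c : R) x y : dotv x (c *: y) = c * dotv x y.
Proof. by rewrite dotvC dotvZl dotvC. Qed.

Lemma dotvNr x y : dotv x (- y) = - dotv x y.
Proof. by rewrite dotvC dotvNl dotvC. Qed.

Lemma dotv0l x : dotv 0 x = 0.
Proof. by rewrite /dotv big1 // => i _; rewrite mxE mul0r. Qed.

Lemma dotv0r x : dotv x 0 = 0.
Proof. by rewrite dotvC dotv0l. Qed.

Lemma dotvv_ge0 x : 0 <= dotv x x.
Proof. by apply: sumr_ge0 => i _; rewrite -expr2 sqr_ge0. Qed.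

Lemma dotvv_eq0 x : dotv x x = 0 -> x = 0.
Proof.
move=> x0; apply/rowP => i; rewrite mxE; apply/eqP; rewrite -sqrf_eq0 expr2.
by apply/eqP; apply: (psumr_eq0P _ x0) => // j _; rewrite -expr2 sqr_ge0.
Qed.

Lemma norm2_ge0 x : 0 <= norm2 x.
Proof. exact: sqrtr_ge0. Qed.

Lemma sqr_norm2 x : norm2 x ^+ 2 = dotv x x.
Proof. by rewrite sqr_sqrtr // dotvv_ge0. Qed.

Lemma norm20 : norm2 (0 : vec) = 0.
Proof. by rewrite /norm2 dotv0l sqrtr0. Qed.

Lemma cauchy_schwarz_sqr x y : dotv x y ^+ 2 <= dotv x x * dotv y y.
Proof.
have [/dotvv_eq0 ->|y0] := eqVneq (dotv y y) 0; first by rewrite !dotv0r expr0n mulr0.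
have ypos : 0 < dotv y y by rewrite lt_def y0 dotvv_ge0.
pose t := dotv x y / dotv y y.
have tyy : t * dotv y y = dotv x y by rewrite divfK.
have := dotvv_ge0 (x - t *: y).
rewrite !(dotvDl, dotvDr, dotvNl, dotvNr, dotvZl, dotvZr) (dotvC y x).
move: tyy ypos; set X := dotv x x; set Y := dotv y y; set D := dotv x y => tyy ypos h.
nra.
Qed.

Lemma cauchy_schwarz x y : `|dotv x y| <= norm2 x * norm2 y.
Proof.
rewrite -(@ler_pXn2r _ 2) ?inE ?nnegrE ?mulr_ge0 ?norm2_ge0 //.
by rewrite exprMn !sqr_norm2 real_normK ?num_real // cauchy_schwarz_sqr.
Qed.

Lemma sqr_norm2D x y :
  norm2 (x + y) ^+ 2 = norm2 x ^+ 2 + 2 * dotv x y + norm2 y ^+ 2.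
Proof. rewrite !sqr_norm2 dotvDl !dotvDr (dotvC y x); ring. Qed.

Lemma norm2D x y : norm2 (x + y) <= norm2 x + norm2 y.
Proof.
rewrite -(@ler_pXn2r _ 2) ?inE ?nnegrE ?addr_ge0 ?norm2_ge0 // sqr_norm2D.
have := le_trans (ler_norm _) (cauchy_schwarz x y); lra.
Qed.

Lemma norm2Z (c : R) x : norm2 (c *: x) = `|c| * norm2 x.
Proof.
by rewrite /norm2 dotvZl dotvZr mulrA -expr2 sqrtrM ?sqr_ge0 // sqrtr_sqr.
Qed.

Lemma norm2_subC x y : norm2 (x - y) = norm2 (y - x).
Proof. by rewrite -opprB -scaleN1r norm2Z normrN1 mul1r. Qed.

Lemma norm2_split x y z : norm2 (x - z) <= norm2 (x - y) + norm2 (y - z).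
Proof. by have := norm2D (x - y) (y - z); rewrite addrA subrK. Qed.

Lemma norm2_dist_dist x y : `|norm2 x - norm2 y| <= norm2 (x - y).
Proof.
have := norm2_split x y 0; have := norm2_split y x 0.
rewrite !subr0 (norm2_subC y x) ler_norml; lra.
Qed.

Lemma coord_le_norm2 x i : `|x 0 i| <= norm2 x.
Proof.
rewrite -(sqrtr_sqr (x 0 i)) ler_sqrt ?dotvv_ge0 // /dotv (bigD1 i) //= expr2 lerDl.
by apply: sumr_ge0 => j _; rewrite -expr2 sqr_ge0.
Qed.

End Euclidean.

Section Subsequences.
Variable R : realType.
Implicit Types (u : nat -> R) (phi : nat -> nat).

Definition rcvg u (l : R) :=
  forall e, 0 < e -> exists N, forall j, (N <= j)%N -> `|u j - l| < e.

Lemma mono_leq_self phi : {mono phi : i j / (i <= j)%N} -> forall j, (j <= phi j)%N.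
Proof.
move=> /leqW_mono phi_lt; elim=> [|j IH] //.
by apply: leq_ltn_trans IH _; rewrite phi_lt.
Qed.

Lemma rcvg_subseq u l phi :
  {mono phi : i j / (i <= j)%N} -> rcvg u l -> rcvg (u \o phi) l.
Proof.
move=> phi_mono ul e e0; have [N hN] := ul e e0; exists N => j Nj.
exact/hN/(leq_trans Nj)/mono_leq_self.
Qed.

Lemma bounded_rseq_subseq_rcvg u (M : R) : (forall j, `|u j| <= M) ->
  exists2 phi, {mono phi : i j / (i <= j)%N} & exists l, rcvg (u \o phi) l.
Proof.
move=> uM; have bu : bounded_fun u.
  exists M; split; first exact: num_real.
  by move=> x Mx y _; apply: le_trans (uM y) (ltW Mx).
have [phi phi_mono /cvg_ex[l ul]] := bolzano_weierstrass bu.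
exists phi; first by move=> i j; have := phi_mono i j; rewrite !leEnat.
exists l => e e0; have [N _ hN] := (cvgrPdistC_lt _ _).1 ul e e0.
by exists N => j Nj; apply: hN.
Qed.

Lemma eventually_inv_succ_lt (e : R) : 0 < e ->
  exists N, forall j, (N <= j)%N -> 1 / (j%:R + 1) < e.
Proof.
move=> e0; exists (Num.Def.archi_bound (1 / e)) => j Nj.
have := archi_boundP (ltW (divr_gt0 ltr01 e0) : 0 <= 1 / e).
rewrite -(ler_nat R) in Nj => bound_gt.
rewrite ltr_pdivrMr ?ltr_wpDl // mulrC -ltr_pdivrMr //; lra.
Qed.

Lemma eventually_nat_ge (c : R) : exists N, forall j, (N <= j)%N -> c <= j%:R.
Proof.
exists (Num.Def.archi_bound `|c|) => j Nj.
apply: le_trans (ler_norm c) (le_trans (ltW (archi_boundP (normr_ge0 c))) _).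
by rewrite ler_nat.
Qed.

End Subsequences.

Section VectorSubsequences.
Variables (R : realType) (n : nat).
Local Notation vec := 'rV[R]_n.
Implicit Types (u : nat -> vec) (phi : nat -> nat).

Definition vcvg u (l : vec) :=
  forall e, 0 < e -> exists N, forall j, (N <= j)%N -> norm2 (u j - l) < e.

Lemma vcvg_row u (L : 'I_n -> R) :
  (forall i, rcvg (fun j => u j 0 i) (L i)) -> vcvg u (\row_i L i).
Proof.
move=> uL e e0; pose e' := e / (n%:R + 1).
have n1_gt0 : (0 : R) < n%:R + 1 by rewrite ltr_wpDl.
have e'0 : 0 < e' by rewrite divr_gt0.
have [N hN] := choice (fun i => uL i e' e'0).
exists (\max_(i < n) N i)%N => j Nj.
have dot_le : dotv (u j - \row_i L i) (u j - \row_i L i) <= e' ^+ 2 *+ n.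
  rewrite /dotv -[n in _ *+ n]card_ord -sumr_const; apply: ler_sum => i _.
  rewrite !mxE -expr2 -real_normK ?num_real // ler_pXn2r ?inE ?nnegrE ?normr_ge0 ?ltW //.
  exact/hN/(leq_trans (leq_bigmax i)).
rewrite -(@ltr_pXn2r _ 2) ?inE ?nnegrE ?norm2_ge0 ?ltW // sqr_norm2.
apply: le_lt_trans dot_le _; rewrite -mulr_natr.
have e'n1 : e' * (n%:R + 1) = e by rewrite divfK ?gt_eqF.
have : (0 : R) <= n%:R by [].
move: e'n1 e'0; set m : R := n%:R; nra.
Qed.

Lemma bounded_subseq_coord_rcvg u (M : R) : (forall j, norm2 (u j) <= M) ->
  forall k, exists2 phi, {mono phi : i j / (i <= j)%N} &
    forall i : 'I_n, (i < k)%N -> exists l, rcvg (fun j => u (phi j) 0 i) l.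
Proof.
move=> uM; elim=> [|k [phi phi_mono IH]]; first by exists id.
have [nk|kn] := ltnP k n; last first.
  by exists phi => // i ik; apply: IH; apply: leq_trans (ltn_ord i) kn.
pose ik := Ordinal nk.
have [psi psi_mono [l hl]] := @bounded_rseq_subseq_rcvg R (fun j => u (phi j) 0 ik) M
  (fun j => le_trans (coord_le_norm2 _ _) (uM _)).
exists (phi \o psi) => [i j|i]; first by rewrite /= phi_mono psi_mono.
rewrite ltnS leq_eqVlt => /orP[/eqP ei|ik_lt]; first by exists l; rewrite (_ : i = ik) //; apply: val_inj.
have [l' hl'] := IH i ik_lt; exists l'.
exact: (rcvg_subseq (u := fun j => u (phi j) 0 i)).
Qed.

Lemma bounded_subseq_vcvg u (M : R) : (forall j, norm2 (u j) <= M) ->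
  exists2 phi, {mono phi : i j / (i <= j)%N} & exists l, vcvg (u \o phi) l.
Proof.
move=> uM; have [phi phi_mono hcoord] := bounded_subseq_coord_rcvg uM n.
have [L hL] := choice (fun i : 'I_n => hcoord i (ltn_ord i)).
by exists phi => //; exists (\row_i L i); apply: vcvg_row.
Qed.

End VectorSubsequences.

Section Continuity.
Variables (R : realType) (n : nat).
Local Notation vec := 'rV[R]_n.
Implicit Types (f G H : vec -> R) (x y z : vec) (u : nat -> vec).

Definition cont_at G z := forall e, 0 < e ->
  exists2 d, 0 < d & forall y, norm2 (y - z) < d -> `|G y - G z| < e.

Lemma cont_atD G H z : cont_at G z -> cont_at H z -> cont_at (fun y => G y + H y) z.
Proof.
move=> Gz Hz e e0; have e2 : 0 < e / 2 by rewrite divr_gt0.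
have [d1 d1_gt0 hd1] := Gz _ e2; have [d2 d2_gt0 hd2] := Hz _ e2.
exists (Num.min d1 d2) => [|y]; first by rewrite lt_min d1_gt0.
rewrite lt_min => /andP[/hd1 h1 /hd2 h2].
rewrite (_ : _ - _ = (G y - G z) + (H y - H z)); last by ring.
by apply: le_lt_trans (ler_normD _ _) _; lra.
Qed.

Lemma cont_atMl (c : R) G z : cont_at G z -> cont_at (fun y => c * G y) z.
Proof.
move=> Gz e e0; have c1 : 0 < `|c| + 1 by rewrite ltr_wpDl.
have [d d0 hd] := Gz _ (divr_gt0 e0 c1); exists d => // y /hd.
rewrite -mulrBr normrM ltr_pdivlMr // => h.
apply: le_lt_trans h; rewrite mulrC ler_wpM2l ?normr_ge0 //; lra.
Qed.

Lemma cont_at_sqr_norm2 c z : cont_at (fun y => norm2 (y - c) ^+ 2) z.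
Proof.
move=> e e0; set b := norm2 (z - c); have b0 : 0 <= b := norm2_ge0 _.
have b2 : 0 < 2 * b + 2 by lra.
exists (Num.min 1 (e / (2 * b + 2))) => [|y]; first by rewrite lt_min ltr01 divr_gt0.
rewrite lt_min ltr_pdivlMr // => /andP[yz1 yz2].
have := norm2_dist_dist (y - c) (z - c).
rewrite (_ : (y - c) - (z - c) = y - z); last by rewrite opprB addrA subrK.
have := norm2_split y z c; have := norm2_ge0 (y - c); have := norm2_ge0 (y - z).
rewrite -/b; set a := norm2 (y - c); set d := norm2 (y - z) in yz1 yz2 * => d0 a0 ad ab.
rewrite (_ : _ - _ = (a - b) * (a + b)); last by ring.
rewrite normrM (ger0_norm (_ : 0 <= a + b)); last by lra.
have : `|a - b| * (a + b) <= d * (a + b) by apply: ler_wpM2r; lra.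
nra.
Qed.

Lemma locally_lipschitz_ge0 f : locally_lipschitz f -> forall z,
  exists2 del, 0 < del & exists2 L, 0 <= L & forall x y,
    norm2 (x - z) < del -> norm2 (y - z) < del -> `|f x - f y| <= L * norm2 (x - y).
Proof.
move=> fL z; have [del del0 [L hL]] := fL z; exists del => //.
exists `|L| => // x y xz yz; apply: le_trans (hL x y xz yz) _.
by rewrite ler_wpM2r ?norm2_ge0 ?ler_norm.
Qed.

Lemma locally_lipschitz_cont f : locally_lipschitz f -> forall z, cont_at f z.
Proof.
move=> fL z e e0; have [del del0 [L L0 hL]] := locally_lipschitz_ge0 fL z.
have L1 : 0 < L + 1 by rewrite ltr_wpDl.
exists (Num.min del (e / (L + 1))) => [|y]; first by rewrite lt_min del0 divr_gt0.
rewrite lt_min ltr_pdivlMr // => /andP[yz1 yz2].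
have zz : norm2 (z - z) < del by rewrite subrr norm20.
apply: le_lt_trans (hL y z yz1 zz) _.
have := norm2_ge0 (y - z); move: yz2; set d := norm2 (y - z); nra.
Qed.

Lemma gfun_cont f c (a : R) : locally_lipschitz f -> forall z, cont_at (gfun f c a) z.
Proof.
move=> fL z; apply: cont_atD; first exact: locally_lipschitz_cont.
exact/cont_atMl/cont_at_sqr_norm2.
Qed.

Lemma cont_at_norm2 c z : cont_at (fun y => norm2 (y - c)) z.
Proof.
move=> e e0; exists e => // y yz; apply: le_lt_trans (norm2_dist_dist _ _) _.
by rewrite opprB addrA subrK.
Qed.

Lemma vcvg_cont_le G u l (c : R) :
  vcvg u l -> cont_at G l -> (forall j, G (u j) <= c) -> G l <= c.
Proof.
move=> ul Gl uc; apply/ler_addgt0Pr => e e0.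
have [d d0 hd] := Gl e e0; have [N hN] := ul d d0.
have := ler_norm (G l - G (u N)); rewrite distrC.
have := hd _ (hN N (leqnn N)); have := uc N; lra.
Qed.

End Continuity.

Section Minimization.
Local Open Scope classical_set_scope.
Variables (R : realType) (n : nat).
Local Notation vec := 'rV[R]_n.
Implicit Types (G : vec -> R) (y z : vec).

Lemma closed_ball_argmin G z (rho m : R) : 0 <= rho -> (forall y, cont_at G y) ->
  (forall y, norm2 (y - z) <= rho -> m <= G y) ->
  exists2 y0, norm2 (y0 - z) <= rho & forall y, norm2 (y - z) <= rho -> G y0 <= G y.
Proof.
move=> rho0 Gc Gm; pose E := [set G y | y in [set y | norm2 (y - z) <= rho]].
have hE : has_inf E.
  split; first by exists (G z), z => //; rewrite /= subrr norm20.
  by exists m => _ [y yz <-]; exact: Gm.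
have inf_le y : norm2 (y - z) <= rho -> inf E <= G y.
  by move=> yz; apply: (ge_inf hE.2); exists y.
have near_inf j : exists y, norm2 (y - z) <= rho /\ G y < inf E + 1 / (j%:R + 1).
  have [_ [y yz <-] Gy] := inf_adherent (divr_gt0 ltr01 (ltr_wpDl (ler0n _ j) ltr01)) hE.
  by exists y.
have [ys hys] := choice near_inf.
have ys_bnd j : norm2 (ys j) <= norm2 z + rho.
  by have := norm2_split (ys j) z 0; rewrite !subr0; have := (hys j).1; lra.
have [phi phi_mono [y0 ys_y0]] := bounded_subseq_vcvg ys_bnd.
have y0z : norm2 (y0 - z) <= rho.
  by apply: (vcvg_cont_le ys_y0 (cont_at_norm2 _ _)) => j; exact: (hys _).1.
exists y0 => // y /inf_le; apply: le_trans; apply/ler_addgt0Pr => e e0.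
have e2 : 0 < e / 2 by rewrite divr_gt0.
have [d d0 hd] := Gc y0 _ e2; have [N1 hN1] := ys_y0 d d0.
have [N2 hN2] := eventually_inv_succ_lt e2.
have [j [jN1 jN2]] : exists j, (N1 <= j)%N /\ (N2 <= j)%N.
  by exists (maxn N1 N2); rewrite leq_maxl leq_maxr.
have := hd _ (hN1 j jN1); rewrite /= distrC ltr_norml => /andP[_ Gj].
have inv_lt := hN2 _ (leq_trans jN2 (mono_leq_self phi_mono j)).
have Gys := (hys (phi j)).2; lra.
Qed.

End Minimization.

Section Subgradients.
Variables (R : realType) (n : nat).
Local Notation vec := 'rV[R]_n.
Implicit Types (f : vec -> R) (x y z v : vec).

Lemma frechet_subgrad_limiting f x v : frechet_subgrad f x v -> limiting_subgrad f x v.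
Proof.
move=> xv; exists (fun=> x), (fun=> v); split=> // e e0; exists 0%N => j _.
by rewrite !subrr norm20 normr0.
Qed.

Lemma quad_min_frechet_subgrad f y0 z (k del : R) : 0 <= k -> 0 < del ->
  (forall x, norm2 (x - y0) < del ->
    f y0 + k * norm2 (y0 - z) ^+ 2 <= f x + k * norm2 (x - z) ^+ 2) ->
  frechet_subgrad f y0 ((2 * k) *: (z - y0)).
Proof.
move=> k0 del0 y0_min eps eps0; have k1 : 0 < k + 1 by rewrite ltr_wpDl.
exists (Num.min del (eps / (k + 1))) => [|x _]; first by rewrite lt_min del0 divr_gt0.
rewrite lt_min ltr_pdivlMr // => /andP[/y0_min].
have -> : x - z = (x - y0) + (y0 - z) by rewrite addrA subrK.
rewrite (sqr_norm2D (x - y0)) -(opprB y0 z) dotvZl dotvNl (dotvC (y0 - z)) => x_min xy0.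
set d := norm2 (x - y0) in x_min xy0 *; set D := dotv (x - y0) (y0 - z) in x_min *.
have d0 : 0 <= d := norm2_ge0 _.
have kd : k * d * d <= eps * d by rewrite ler_wpM2r //; nra.
nra.
Qed.

Lemma frechet_subgrad_dense f (m : R) p (del L : R) :
  locally_lipschitz f -> (forall x, m <= f x) -> 0 < del -> 0 <= L ->
  (forall x y, norm2 (x - p) < del -> norm2 (y - p) < del ->
    `|f x - f y| <= L * norm2 (x - y)) ->
  forall z, norm2 (z - p) < del / 2 -> forall eta : R, 0 < eta ->
  exists y v, [/\ norm2 (y - z) < eta, frechet_subgrad f y v & norm2 v <= 2 * L].
Proof.
move=> fL fm del0 L0 fLp z zp eta eta0.
pose rho := Num.min eta (del / 2) / 2.
have rho0 : 0 < rho by rewrite divr_gt0 // lt_min eta0 divr_gt0.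
have rho_eta : rho < eta.
  have : Num.min eta (del / 2) <= eta by rewrite ge_min lexx.
  rewrite /rho; lra.
have rho_del : rho <= del / 4.
  have : Num.min eta (del / 2) <= del / 2 by rewrite ge_min lexx orbT.
  rewrite /rho; lra.
have ball_p y : norm2 (y - z) <= rho -> norm2 (y - p) < del.
  by move=> yz; have := norm2_split y z p; lra.
pose k := (2 * L + 1) / rho.
have k0 : 0 < k by rewrite divr_gt0 // ltr_wpDl // mulr_ge0.
have k_rho : k * rho = 2 * L + 1 by rewrite divfK // gt_eqF.
pose phi y := f y + k * norm2 (y - z) ^+ 2.
have phi_cont y : cont_at phi y.
  exact/cont_atD/cont_atMl/cont_at_sqr_norm2/locally_lipschitz_cont.
have phi_ge y : norm2 (y - z) <= rho -> m <= phi y.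
  by move=> _; apply: le_trans (fm y) _; rewrite lerDl mulr_ge0 ?sqr_ge0 ?ltW.
have [y0 y0z y0_min] := closed_ball_argmin (ltW rho0) phi_cont phi_ge.
set nn := norm2 (y0 - z) in y0z *; have nn0 : 0 <= nn := norm2_ge0 _.
have k_nn : k * nn <= L.
  have zz : norm2 (z - z) <= rho by rewrite subrr norm20 ltW.
  have := y0_min z zz; rewrite /phi subrr norm20 expr0n /= mulr0 addr0 -/nn.
  have := fLp z y0 (ball_p z zz) (ball_p y0 y0z); rewrite norm2_subC -/nn.
  have := ler_norm (f z - f y0) => fzy0 Lip y0z_min.
  have [->|nn_gt0] := eqVneq nn 0; first by rewrite mulr0.
  rewrite -(ler_pM2r (_ : 0 < nn)) ?lt_def ?nn_gt0 //; nra.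
have nn_rho : 2 * nn < rho by rewrite -(ltr_pM2l k0) k_rho; lra.
exists y0, ((2 * k) *: (z - y0)); split.
- by rewrite -/nn; lra.
- apply: (@quad_min_frechet_subgrad _ _ _ _ (rho / 2)) => [||x xy0]; first exact: ltW.
    by rewrite divr_gt0.
  apply: y0_min; have := norm2_split x y0 z; rewrite -/nn; lra.
- rewrite norm2Z norm2_subC -/nn ger0_norm; first by nra.
  by rewrite mulr_ge0 // ltW.
Qed.

End Subgradients.

Section Convexity.
Variables (R : realType) (n : nat).
Local Notation vec := 'rV[R]_n.
Implicit Types (G : vec -> R) (p u w y z s : vec).

Definition convex_on_ball G p (r : R) := forall u w (t : R),
  norm2 (u - p) < r -> norm2 (w - p) < r -> 0 <= t -> t <= 1 ->
  G (t *: u + (1 - t) *: w) <= t * G u + (1 - t) * G w.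

Lemma ball_convex p (r : R) u w (t : R) :
  norm2 (u - p) < r -> norm2 (w - p) < r -> 0 <= t -> t <= 1 ->
  norm2 (t *: u + (1 - t) *: w - p) < r.
Proof.
move=> up wp t0 t1.
have -> : t *: u + (1 - t) *: w - p = t *: (u - p) + (1 - t) *: (w - p).
  by apply/rowP => i; rewrite !mxE; ring.
apply: le_lt_trans (norm2D _ _) _; rewrite !norm2Z !ger0_norm ?subr_ge0 //.
have [->|t_neq0] := eqVneq t 0; first by rewrite mul0r add0r subr0 mul1r.
have t_gt0 : 0 < t by rewrite lt_def t_neq0.
have : t * norm2 (u - p) < t * r by rewrite (ltr_pM2l t_gt0).
have : (1 - t) * norm2 (w - p) <= (1 - t) * r.
  by apply: ler_wpM2l; [rewrite subr_ge0 | exact: ltW].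
lra.
Qed.

Lemma support_convex_comb G y s u w (t : R) : 0 <= t -> t <= 1 ->
  t *: u + (1 - t) *: w = y ->
  G y + dotv s (u - y) <= G u -> G y + dotv s (w - y) <= G w ->
  G y <= t * G u + (1 - t) * G w.
Proof.
move=> t0 t1 uwy su sw.
have comb0 : t *: (u - y) + (1 - t) *: (w - y) = 0.
  by rewrite -uwy; apply/rowP => i; rewrite !mxE; ring.
have dot0 : t * dotv s (u - y) + (1 - t) * dotv s (w - y) = 0.
  by rewrite -!dotvZr -dotvDr comb0 dotv0r.
have : t * (G y + dotv s (u - y)) <= t * G u by rewrite ler_wpM2l.
have : (1 - t) * (G y + dotv s (w - y)) <= (1 - t) * G w by rewrite ler_wpM2l ?subr_ge0.
nra.
Qed.

(* The minorant at [y] near the convex combination [z] is applied to [u] and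
   [w] shifted by [y - z]. *)
Lemma convex_of_approx_support G p (r : R) : (forall z, cont_at G z) ->
  (forall z, norm2 (z - p) < r -> forall eta : R, 0 < eta -> exists y s,
    [/\ norm2 (y - z) < eta, norm2 (y - p) < r &
        forall x, norm2 (x - p) < r -> G y + dotv s (x - y) <= G x]) ->
  convex_on_ball G p r.
Proof.
move=> Gc Gsupp u w t up wp t0 t1; set z := _ + _.
have zp : norm2 (z - p) < r by apply: ball_convex.
apply/ler_addgt0Pr => e e0; have e3 : 0 < e / 3 by rewrite divr_gt0.
have [du du0 hdu] := Gc u _ e3; have [dw dw0 hdw] := Gc w _ e3.
have [dz dz0 hdz] := Gc z _ e3.
pose eta := Num.min (Num.min du dw) (Num.min dz (Num.min (r - norm2 (u - p)) (r - norm2 (w - p)))).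
have eta0 : 0 < eta by rewrite !lt_min du0 dw0 dz0 !subr_gt0 up wp.
have [y [s [+ yp ys]]] := Gsupp z zp eta eta0.
rewrite !lt_min => /andP[/andP[yz_u yz_w] /andP[yz_z /andP[yz_up yz_wp]]].
have shift x : x + (y - z) - x = y - z by rewrite addrC addKr.
have shift_p x : norm2 (x - p) < r - norm2 (y - z) -> norm2 (x + (y - z) - p) < r.
  by move=> xp; have := norm2_split (x + (y - z)) x p; rewrite shift; lra.
have Gy : G y <= t * G (u + (y - z)) + (1 - t) * G (w + (y - z)).
  apply: (support_convex_comb (s := s)) => //.
  - by rewrite /z; apply/rowP => i; rewrite !mxE; ring.
  - by apply/ys/shift_p; lra.
  - by apply/ys/shift_p; lra.
have := hdu (u + (y - z)); rewrite shift => /(_ yz_u); rewrite ltr_norml => /andP[_ Gu].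
have := hdw (w + (y - z)); rewrite shift => /(_ yz_w); rewrite ltr_norml => /andP[_ Gw].
have := hdz y yz_z; rewrite ltr_norml => /andP[Gz _].
have : t * G (u + (y - z)) <= t * (G u + e / 3) by rewrite ler_wpM2l //; lra.
have : (1 - t) * G (w + (y - z)) <= (1 - t) * (G w + e / 3).
  by rewrite ler_wpM2l ?subr_ge0 //; lra.
nra.
Qed.

End Convexity.

Section ProxRegularity.
Variables (R : realType) (n : nat).
Local Notation vec := 'rV[R]_n.
Implicit Types (f : vec -> R) (x v : vec) (xs vs : nat -> vec).

Lemma vcvg_inv_succ xs (l : vec) (phi : nat -> nat) : {mono phi : i j / (i <= j)%N} ->
  (forall j, norm2 (xs j - l) < 1 / (j%:R + 1)) -> vcvg (xs \o phi) l.
Proof.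
move=> phi_mono xsl e e0; have [N hN] := eventually_inv_succ_lt e0.
exists N => j Nj; apply: lt_trans (xsl _) (hN _ _).
exact: leq_trans Nj (mono_leq_self phi_mono j).
Qed.

Lemma vcvg_limiting_subgrad f xs vs xbar v : cont_at f xbar ->
  (forall j, frechet_subgrad f (xs j) (vs j)) -> vcvg xs xbar -> vcvg vs v ->
  limiting_subgrad f xbar v.
Proof.
move=> fc xsv xsx vsv; exists xs, vs; split=> // e e0.
have [d d0 hd] := fc e e0; have ed : 0 < Num.min e d by rewrite lt_min e0 d0.
have [N1 hN1] := xsx _ ed.
have [N2 hN2] := vsv e e0; exists (maxn N1 N2) => j.
rewrite geq_max => /andP[/hN1 + /hN2 vj]; rewrite lt_min => /andP[xe xd].
by split=> //; apply: hd.
Qed.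

(* Otherwise, taking radius [1 / (k + 1)] and constant [k] for each [k], the
   violating subgradients have a cluster point [vbar], a limiting subgradient
   at [ybar] for which the prox-regularity inequality fails. *)
Lemma prox_regular_uniform f ybar (B : R) : cont_at f ybar -> prox_regular_at f ybar ->
  exists2 r, 0 < r & exists a : R, forall x v x', norm2 (x - ybar) < r ->
    frechet_subgrad f x v -> norm2 v <= B -> norm2 (x' - ybar) < r ->
    f x + dotv v (x' - x) - a / 2 * norm2 (x' - x) ^+ 2 <= f x'.
Proof.
move=> fc [_ fpr].
suff [k hk] : exists k : nat, forall x v x', norm2 (x - ybar) < 1 / (k%:R + 1) ->
    frechet_subgrad f x v -> norm2 v <= B -> norm2 (x' - ybar) < 1 / (k%:R + 1) ->
    f x + dotv v (x' - x) - k%:R / 2 * norm2 (x' - x) ^+ 2 <= f x'.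
  by exists (1 / (k%:R + 1)); [rewrite divr_gt0 // ltr_wpDl | exists k%:R].
apply: contrapT => no_k.
have bad k : exists t : vec * vec * vec, [/\ norm2 (t.1.1 - ybar) < 1 / (k%:R + 1),
    frechet_subgrad f t.1.1 t.1.2, norm2 t.1.2 <= B, norm2 (t.2 - ybar) < 1 / (k%:R + 1) &
    f t.2 < f t.1.1 + dotv t.1.2 (t.2 - t.1.1) - k%:R / 2 * norm2 (t.2 - t.1.1) ^+ 2].
  apply: contrapT => nk; apply: no_k; exists k => x v x' xk xv vB x'k.
  by rewrite leNgt; apply/negP => x'_lt; apply: nk; exists (x, v, x').
have [T hT] := choice bad.
pose xs j := (T j).1.1; pose vs j := (T j).1.2; pose xs' j := (T j).2.
have vsB j : norm2 (vs j) <= B by case: (hT j).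
have [phi phi_mono [vbar vs_vbar]] := bounded_subseq_vcvg vsB.
have xs_ybar : vcvg (xs \o phi) ybar by apply: vcvg_inv_succ => // j; case: (hT j).
have xs'_ybar : vcvg (xs' \o phi) ybar by apply: vcvg_inv_succ => // j; case: (hT j).
have xsv j : frechet_subgrad f (xs (phi j)) (vs (phi j)) by case: (hT (phi j)).
have [_ [eps [a [eps0 _ prox]]]] := fpr vbar (vcvg_limiting_subgrad fc xsv xs_ybar vs_vbar).
have [d d0 hd] := fc eps eps0; have ed : 0 < Num.min eps d by rewrite lt_min eps0 d0.
have [N1 hN1] := xs_ybar _ ed.
have [N2 hN2] := xs'_ybar eps eps0; have [N3 hN3] := vs_vbar eps eps0.
have [N4 hN4] := eventually_nat_ge a.
have [j [j1 j2 j3 j4]] : exists j, [/\ (N1 <= j)%N, (N2 <= j)%N, (N3 <= j)%N & (N4 <= j)%N].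
  by exists (maxn N1 (maxn N2 (maxn N3 N4))); rewrite !leq_max !leqnn !orbT.
move: (hN1 j j1); rewrite lt_min => /andP[xj_eps /hd].
rewrite ltr_norml => /andP[_ fxj]; have fxj_lt : f (xs (phi j)) < f ybar + eps by lra.
have a_le : a <= (phi j)%:R by rewrite (le_trans (hN4 j j4)) // ler_nat mono_leq_self.
have := prox _ _ xj_eps (frechet_subgrad_limiting (xsv j)) (hN3 j j3) fxj_lt _ (hN2 j j2).
have [_ _ _ _ violation] := hT (phi j); rewrite -/(xs _) -/(vs _) -/(xs' _) in violation.
have q0 := sqr_ge0 (norm2 (xs' (phi j) - xs (phi j))).
move: violation q0 a_le; set q := _ ^+ 2; set k := (phi j)%:R => violation q0 a_le.
have : a / 2 * q <= k / 2 * q by apply: ler_wpM2r => //; lra.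
move=> aq prox_j; lra.
Qed.

End ProxRegularity.

Section Threshold.
Variables (R : realType) (n : nat).
Local Notation vec := 'rV[R]_n.
Implicit Types (f : vec -> R) (c y : vec).

Lemma gfun_convex_on_ball f (m : R) ybar : locally_lipschitz f -> (forall x, m <= f x) ->
  prox_regular_at f ybar ->
  exists2 r, 0 < r & exists a0 : R, forall a c, a0 <= a -> convex_on_ball (gfun f c a) ybar r.
Proof.
move=> fL fm fpr; have [del del0 [L L0 fLy]] := locally_lipschitz_ge0 fL ybar.
have [r0 r0_gt0 [k prox]] := prox_regular_uniform (2 * L) (locally_lipschitz_cont fL ybar) fpr.
pose r := Num.min r0 (del / 2).
have r_gt0 : 0 < r by rewrite lt_min r0_gt0 divr_gt0.
have r_r0 : r <= r0 by rewrite ge_min lexx.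
have r_del : r <= del / 2 by rewrite ge_min lexx orbT.
exists r => //; exists k => a c ka; apply: convex_of_approx_support => [|z zy eta eta0].
  exact: gfun_cont.
have eta'0 : 0 < Num.min eta (r - norm2 (z - ybar)) by rewrite lt_min eta0 subr_gt0.
have [y [v [+ yv vL]]] := frechet_subgrad_dense fL fm del0 L0 fLy (lt_le_trans zy r_del) eta'0.
rewrite lt_min => /andP[yz yz_r].
have yy : norm2 (y - ybar) < r by have := norm2_split y z ybar; lra.
exists y, (v + a *: (y - c)); split=> // x xy.
have := prox y v x (lt_le_trans yy r_r0) yv vL (lt_le_trans xy r_r0).
rewrite /gfun (_ : x - c = (x - y) + (y - c)); last by rewrite addrA subrK.
rewrite dotvDl dotvZl (sqr_norm2D (x - y)) (dotvC (y - c)).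
set q := norm2 (x - y); set D := dotv (x - y) (y - c) => x_prox.
have : k / 2 * q ^+ 2 <= a / 2 * q ^+ 2 by rewrite ler_wpM2r ?sqr_ge0 //; lra.
lra.
Qed.

Lemma gfun_convex_near_locally f (m : R) ybar : locally_lipschitz f ->
  (forall x, m <= f x) -> prox_regular_at f ybar ->
  exists2 r, 0 < r & exists a0 : R, forall a, a0 <= a ->
    forall y, norm2 (y - ybar) < r -> forall c, convex_near (gfun f c a) y.
Proof.
move=> fL fm fpr; have [r r0 [a0 ha0]] := gfun_convex_on_ball fL fm fpr.
have r2 : 0 < r / 2 by rewrite divr_gt0.
exists (r / 2) => //; exists a0 => a a0a y yy c; exists (r / 2) => // u w t uy wy.
apply: ha0 => //.
- by have := norm2_split u y ybar; lra.
- by have := norm2_split w y ybar; lra.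
Qed.

(* Thresholds failing along a sequence of [S] would fail near a cluster point
   of it, which lies in [S]. *)
Lemma uniform_threshold (S : vec -> Prop) (P : R -> vec -> Prop) (M : R) :
  (forall y, S y -> norm2 y <= M) ->
  (forall u l, vcvg u l -> (forall j, S (u j)) -> S l) ->
  (forall y, S y -> exists2 r, 0 < r & exists a0 : R, forall a, a0 <= a ->
     forall y', norm2 (y' - y) < r -> P a y') ->
  exists a0 : nat, forall a, a0%:R <= a -> forall y, S y -> P a y.
Proof.
move=> SM Sclosed Sloc; apply: contrapT => no_a0.
have bad k : exists t : R * vec, [/\ k%:R <= t.1, S t.2 & ~ P t.1 t.2].
  apply: contrapT => nk; apply: no_a0; exists k => a ka y Sy.
  by apply: contrapT => nP; apply: nk; exists (a, y).
have [T hT] := choice bad; pose ys j := (T j).2.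
have ysS j : S (ys j) by case: (hT j).
have [phi phi_mono [y ys_y]] := bounded_subseq_vcvg (fun j => SM _ (ysS j)).
have [r r0 [a0 ha0]] := Sloc y (Sclosed _ _ ys_y (fun j => ysS (phi j))).
have [N1 hN1] := ys_y r r0; have [N2 hN2] := eventually_nat_ge a0.
have [ka _ nP] := hT (phi (maxn N1 N2)); apply: nP; apply: ha0 (hN1 _ (leq_maxl _ _)).
apply: le_trans (hN2 _ (leq_maxr N1 N2)) (le_trans _ ka).
by rewrite ler_nat mono_leq_self.
Qed.

End Threshold.

Theorem lemma1 (R : realType) (n : nat) (f : 'rV[R]_n -> R) (x0 : 'rV[R]_n) :
  locally_lipschitz f ->
  (exists m : R, forall x, m <= f x) ->
  (exists M : R, forall x, f x <= f x0 -> norm2 x <= M) ->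
  (forall x, f x <= f x0 -> prox_regular_at f x) ->
  exists2 abar : R, 0 <= abar &
    forall a : R, abar <= a -> forall x y : 'rV[R]_n, f y <= f x0 ->
      convex_near (gfun f x a) y.
Proof.
move=> fL [m fm] [M lev_bnd] lev_prox.
have lev_closed u l : vcvg u l -> (forall j, f (u j) <= f x0) -> f l <= f x0.
  by move=> ul; apply: vcvg_cont_le ul (locally_lipschitz_cont fL l).
have [a0 ha0] := uniform_threshold
  (P := fun a y => forall x, convex_near (gfun f x a) y) lev_bnd lev_closed
  (fun y fy => gfun_convex_near_locally fL fm (lev_prox y fy)).
by exists a0%:R => // a a0a x y fy; apply: ha0.
Qed.
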